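(* Let $\lambda,\mu,\alpha>0$ and let $\xi(t)$, $t\ge 0$, be the Poisson process with uniform catastrophes with parameters $\lambda,\mu,\alpha$ (defined in the context). Let $\varphi:(0,\infty)\to(0,\infty)$ be a function such that $\lim_{T\to\infty}\varphi(T)/T=\infty$. Then the family of random variables $\xi_T(1):=\xi(T)/\varphi(T)$ satisfies the large deviation principle on $\mathbb{R}$ with normalizing function $\psi(T)=\varphi(T)\ln\frac{\varphi(T)}{T}$ and rate function $$ I_2(x)=\begin{cases}\infty, & x\in(-\infty,0),\\ x, & x\in[0,\infty).\end{cases} $$
   Context: Poisson process with uniform catastrophes: let $\eta(n)$, $n\in\mathbb{Z}^+=\{0,1,2,\dots\}$, be a Markov chain on $\mathbb{Z}^+$ with $\eta(0)=0$ and transition probabilities $\mathbf{P}(\eta(n+1)=j\mid\eta(n)=i)=\frac{\lambda}{\lambda+\mu}$ if $j=i+1$ (and $i\ge 1$), $=\frac{\mu}{i(\lambda+\mu)}$ if $0\le j<i$, $i\neq0$, and $=1$ if $i=0$, $j=1$. Let $\nu(t)$, $t\ge0$, be a Poisson process with rate $\alpha$, independent of $\eta$. Set $\xi(t):=\eta(\nu(t))$. Large deviation principle (LDP): a family of real random variables $X_T$ satisfies the LDP with rate function $I:\mathbb{R}\to[0,\infty]$ and normalizing function $\psi(T)\to\infty$ if for every $c\ge0$ the set $\{x: I(x)\le c\}$ is compact, and for every Borel set $B\subseteq\mathbb{R}$, $\limsup_{T\to\infty}\frac{1}{\psi(T)}\ln\mathbf{P}(X_T\in B)\le -I([B])$ and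 $\liminf_{T\to\infty}\frac{1}{\psi(T)}\ln\mathbf{P}(X_T\in B)\ge -I((B))$, where $[B]$ and $(B)$ denote closure and interior, $I(B)=\inf_{x\in B}I(x)$ and $I(\emptyset)=\infty$. *)

From HB Require Import structures.
From mathcomp Require Import all_boot all_order all_algebra.
From mathcomp Require Import all_classical all_reals all_analysis.
Set Implicit Arguments. Unset Strict Implicit. Unset Printing Implicit Defensive.
Import Order.TTheory GRing.Theory Num.Theory.
Import numFieldNormedType.Exports.
Local Open Scope classical_set_scope.
Local Open Scope ring_scope.

Section PUC.
Variable R : realType.

(* One-step transition probability P(eta(n+1) = j | eta(n) = i) of the
   embedded Markov chain eta (Poisson process with uniform catastrophes). *)
Definition puc_trans (lam mu : R) (i j : nat) : R :=
  if i == 0%N then (if j == 1%N then 1 else 0)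
  else if j == i.+1 then lam / (lam + mu)
  else if (j < i)%N then mu / (i%:R * (lam + mu))
  else 0.

(* Law of eta(n), eta(0) = 0: puc_eta_law n j = P(eta(n) = j).
   Chapman-Kolmogorov; the sum over i < n.+1 is exhaustive since
   eta(n) <= n surely (eta increases by at most 1 per step). *)
Fixpoint puc_eta_law (lam mu : R) (n : nat) : nat -> R :=
  match n with
  | 0%N => fun j => if j == 0%N then 1 else 0
  | n'.+1 => fun j => \sum_(i < n'.+1) puc_eta_law lam mu n' i * puc_trans lam mu i j
  end.

Definition poisson_pmf (alpha t : R) (n : nat) : R :=
  expR (- (alpha * t)) * (alpha * t) ^+ n / n`!%:R.

(* P(xi(t) = k) where xi(t) = eta(nu(t)), nu independent of eta. *)
Definition puc_xi_law (lam mu alpha t : R) (k : nat) : \bar R :=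
  (\sum_(n <oo) (poisson_pmf alpha t n * puc_eta_law lam mu n k)%:E)%E.

Definition puc_prob (lam mu alpha : R) (phi : R -> R) (T : R) (B : set R) : \bar R :=
  (\sum_(k <oo) (if pselect (B ((k%:R / phi T)%R)) then puc_xi_law lam mu alpha T k
                 else 0%E))%E.

End PUC.

Section LDP.
Variable R : realType.
Local Open Scope ereal_scope.

Definition rate_inf (I : R -> \bar R) (A : set R) : \bar R := ereal_inf (I @` A).

Definition norm_log (psi : R -> R) (p : R -> \bar R) (T : R) : \bar R :=
  if p T == 0 then -oo else ((ln (fine (p T)) / psi T)%R)%:E.

(* Large deviation principle for the family of laws prob T (a function giving
   P(X_T \in B) for every set B), with rate function I and normalizing
   function psi, as T -> +oo. *)
Definition LDP (prob : R -> set R -> \bar R) (I : R -> \bar R) (psi : R -> R) : Prop :=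
  (forall c : R, (0 <= c)%R -> compact [set x | I x <= c%:E]) /\
  (forall B : set R, measurable B ->
     limf_esup (norm_log psi (fun T => prob T B)) (pinfty_nbhs R)
       <= - rate_inf I (closure B)) /\
  (forall B : set R, measurable B ->
     limf_einf (norm_log psi (fun T => prob T B)) (pinfty_nbhs R)
       >= - rate_inf I (interior B)).

End LDP.

Definition rate_I2 {R : realType} (x : R) : \bar R :=
  if (x < 0)%R then +oo%E else x%:E.

(* Since eta rises by at most one per step, xi(T) <= nu(T), so
   P(xi(T) = k) <= (alpha T)^k / k!; conversely xi(T) = k as soon as
   nu(T) = k and eta climbs straight up, which has probability at least
   e^(-alpha T) (alpha T)^k / k! q^k with q = lam / (lam + mu).  For
   k ~ x phi(T) the bounds ln k! <= k ln k and ln k! >= k ln k - k turn both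
   estimates into -x phi(T) ln(phi(T)/T) + O(T + phi(T)), and phi(T)/T -> oo
   makes the error negligible against phi(T) ln(phi(T)/T).  For the upper
   bound on a set B only its smallest lattice point m/phi(T) matters, since
   sum_(n >= m) (alpha T)^n / n! <= (alpha T)^m / m! e^(alpha T). *)

From Pilot Require Import Defs.
From HB Require Import structures.
From mathcomp Require Import all_boot all_order all_algebra.
From mathcomp Require Import all_classical all_reals all_analysis.
From mathcomp Require Import zify ring lra.
Set Implicit Arguments. Unset Strict Implicit. Unset Printing Implicit Defensive.
Import Order.TTheory GRing.Theory Num.Theory.
Import numFieldNormedType.Exports.
Local Open Scope classical_set_scope.
Local Open Scope ring_scope.

Section embedded_chain.
Variables (R : realType) (lam mu : R).
Hypotheses (lam_gt0 : 0 < lam) (mu_gt0 : 0 < mu).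

Lemma puc_trans_ge0 i j : 0 <= puc_trans lam mu i j.
Proof.
have lm_gt0 : 0 < lam + mu by rewrite addr_gt0.
rewrite /puc_trans; case: ifP => _; first by case: ifP.
case: ifP => _; first by rewrite divr_ge0 // ltW.
by case: ifP => _ //; rewrite divr_ge0 ?mulr_ge0 // ltW.
Qed.

Lemma puc_eta_law_ge0 n k : 0 <= puc_eta_law lam mu n k.
Proof.
elim: n k => [|n IH] k /=; first by case: ifP.
by apply: sumr_ge0 => i _; rewrite mulr_ge0 ?puc_trans_ge0.
Qed.

(* eta moves up by at most one per step *)
Lemma puc_eta_law_eq0 n k : (n < k)%N -> puc_eta_law lam mu n k = 0.
Proof.
elim: n k => [|n IH] k /= nk; first by case: k nk.
apply: big1 => i _; rewrite /puc_trans.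
have ilt := ltn_ord i.
have [k1 kSi ki] : [/\ k != 1, k != i.+1 & ~~ (k < i)]%N by split; lia.
by rewrite (negbTE k1) (negbTE kSi) (negbTE ki) !if_same mulr0.
Qed.

Lemma puc_trans_sum n i : (i <= n)%N -> \sum_(j < n.+2) puc_trans lam mu i j = 1.
Proof.
move=> le_in.
have lm_neq0 : lam + mu != 0 by rewrite gt_eqF // addr_gt0.
have sum_indicator_eq a : (a < n.+2)%N -> \sum_(j < n.+2) ((j == a :> nat)%:R : R) = 1.
  move=> lt_a; rewrite (bigD1 (Ordinal lt_a)) //= eqxx big1 ?addr0 // => j.
  by rewrite -val_eqE /= => /negbTE ->.
have sum_indicator_lt : \sum_(j < n.+2) (((j < i)%N)%:R : R) = i%:R.
  rewrite (eq_bigr (fun j : 'I_n.+2 => if (j < i)%N then 1 else 0)); last by move=> j _; case: ifP.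
  rewrite -big_mkcond /= -(big_ord_widen _ (fun=> 1 : R)); last by lia.
  by rewrite sumr_const card_ord.
case: (posnP i) => [-> | i_gt0].
  rewrite -[RHS](sum_indicator_eq 1%N) //; apply: eq_bigr => j _.
  by rewrite /puc_trans /=; case: eqP.
rewrite (eq_bigr (fun j : 'I_n.+2 => (j == i.+1 :> nat)%:R * (lam / (lam + mu))
   + ((j < i)%N%:R) * (mu / (i%:R * (lam + mu))))); last first.
  move=> j _; rewrite /puc_trans gtn_eqF //.
  case: eqP => [->|_]; first by rewrite ltnNge leqnSn mul1r mul0r addr0.
  by case: ifP; rewrite ?mul0r ?mul1r ?add0r.
rewrite big_split /= -!mulr_suml sum_indicator_eq ?ltnS // sum_indicator_lt.
have i_neq0 : (i%:R : R) != 0 by rewrite pnatr_eq0 -lt0n.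
by field; rewrite lm_neq0 i_neq0.
Qed.

Lemma puc_eta_law_sum n : \sum_(k < n.+1) puc_eta_law lam mu n k = 1.
Proof.
elim: n => [|n IH]; first by rewrite big_ord1.
rewrite /= exchange_big /= -[RHS]IH; apply: eq_bigr => i _.
by rewrite -mulr_sumr puc_trans_sum ?mulr1 // -ltnS.
Qed.

Lemma puc_eta_law_le1 n k : puc_eta_law lam mu n k <= 1.
Proof.
have [/puc_eta_law_eq0 -> // | le_kn] := ltnP n k.
rewrite -(puc_eta_law_sum n) (bigD1 (Ordinal (le_kn : (k < n.+1)%N))) //=.
by rewrite lerDl sumr_ge0 // => i _; exact: puc_eta_law_ge0.
Qed.

(* climbing straight up: P(eta(n) = n) >= P(n upward steps in a row) *)
Lemma puc_eta_law_diag n : (lam / (lam + mu)) ^+ n <= puc_eta_law lam mu n n.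
Proof.
have lm_gt0 : 0 < lam + mu by rewrite addr_gt0.
have q_ge0 : 0 <= lam / (lam + mu) by rewrite divr_ge0 // ltW.
have q_le1 : lam / (lam + mu) <= 1 by rewrite ler_pdivrMr // mul1r lerDl ltW.
elim: n => [|n IH] /=; first by rewrite expr0.
rewrite (bigD1 ord_max) //= exprSr -[X in X <= _]addr0; apply: lerD.
  apply: ler_pM; rewrite ?exprn_ge0 //.
  by rewrite /puc_trans eqxx; case: (n =P 0)%N => [->|].
by apply: sumr_ge0 => i _; rewrite mulr_ge0 ?puc_eta_law_ge0 ?puc_trans_ge0.
Qed.

End embedded_chain.

Lemma nneseries_term_le {R : realType} (u : nat -> \bar R) k :
  (forall n, (0 <= u n)%E) -> (u k <= \sum_(n <oo) u n)%E.
Proof.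
move=> u_ge0; rewrite (nneseriesD1 (n := k)) //; apply: leeDl.
by apply: nneseries_ge0 => n _ _; exact: u_ge0.
Qed.

Section exponential_series.
Variables (R : realType) (a : R).
Hypothesis a_ge0 : 0 <= a.

Lemma exp_partial_sum_le N : \sum_(0 <= j < N) a ^+ j / j`!%:R <= expR a.
Proof.
apply: (@nondecreasing_cvgn_le R (series (exp_coeff a))).
- by apply: nondecreasing_series => n _ _; exact: exp_coeff_ge0.
- exact: is_cvg_series_exp_coeff.
Qed.

Lemma exp_coeff_le_mul m n : (m <= n)%N ->
  a ^+ n / n`!%:R <= a ^+ m / m`!%:R * (a ^+ (n - m) / (n - m)`!%:R).
Proof.
move=> le_mn; rewrite mulrACA -exprD subnKC // -invfM -natrM.
rewrite ler_wpM2l ?exprn_ge0 // lef_pV2 ?posrE ?ltr0n ?muln_gt0 ?fact_gt0 // ler_nat.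
by rewrite -(bin_fact le_mn) leq_pmull // bin_gt0.
Qed.

Lemma exp_tail_le m N :
  \sum_(0 <= n < N | (m <= n)%N) a ^+ n / n`!%:R <= a ^+ m / m`!%:R * expR a.
Proof.
have -> : \sum_(0 <= n < N | (m <= n)%N) a ^+ n / n`!%:R = \sum_(m <= n < N) a ^+ n / n`!%:R.
  by rewrite [RHS](@big_nat_widenl _ _ _ m 0).
rewrite -[m]add0n big_addn add0n.
apply: le_trans (_ : \sum_(0 <= i < N - m) a ^+ m / m`!%:R * (a ^+ i / i`!%:R) <= _).
  by apply: ler_sum => i _; have := exp_coeff_le_mul (leq_addl i m); rewrite addnK.
by rewrite -mulr_sumr ler_wpM2l ?exp_partial_sum_le // divr_ge0 ?exprn_ge0.
Qed.

End exponential_series.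

Section xi_law_bounds.
Variables (R : realType) (lam mu alpha T : R).
Hypotheses (lam_gt0 : 0 < lam) (mu_gt0 : 0 < mu) (aT_ge0 : 0 <= alpha * T).
Local Notation a := (alpha * T).
Local Notation q := (lam / (lam + mu)).

Lemma poisson_pmfE n : Defs.poisson_pmf alpha T n = expR (- a) * (a ^+ n / n`!%:R).
Proof. by rewrite /Defs.poisson_pmf mulrA. Qed.

Lemma puc_xi_term_ge0 k n : (0 <= (Defs.poisson_pmf alpha T n * puc_eta_law lam mu n k)%:E)%E.
Proof.
by rewrite lee_fin poisson_pmfE !mulr_ge0 ?expR_ge0 ?exprn_ge0 ?invr_ge0 ?puc_eta_law_ge0.
Qed.

Lemma puc_xi_law_ge0 k : (0 <= puc_xi_law lam mu alpha T k)%E.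
Proof. by apply: nneseries_ge0 => n _ _; exact: puc_xi_term_ge0. Qed.

(* xi(T) = k forces nu(T) >= k *)
Lemma puc_xi_law_le k : (puc_xi_law lam mu alpha T k <= (a ^+ k / k`!%:R)%:E)%E.
Proof.
apply: lime_le; first by apply: is_cvg_nneseries => n _ _; exact: puc_xi_term_ge0.
apply: nearW => N; rewrite sumEFin lee_fin.
have term_le n : Defs.poisson_pmf alpha T n * puc_eta_law lam mu n k <=
    expR (- a) * (if (k <= n)%N then a ^+ n / n`!%:R else 0).
  rewrite poisson_pmfE; case: leqP => [_ | lt_nk]; last by rewrite puc_eta_law_eq0 ?mulr0.
  by rewrite ler_piMr ?puc_eta_law_le1 // mulr_ge0 ?expR_ge0 ?divr_ge0 ?exprn_ge0.
apply: le_trans (ler_sum _ (fun n _ => term_le n)) _.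
rewrite -mulr_sumr -big_mkcond /=.
apply: le_trans (ler_wpM2l (expR_ge0 _) (exp_tail_le aT_ge0 k N)) _.
by rewrite mulrCA -expRD addNr expR0 mulr1.
Qed.

(* one way to reach xi(T) = k: nu(T) = k and eta climbs straight up *)
Lemma puc_xi_law_ge k :
  ((Defs.poisson_pmf alpha T k * q ^+ k)%:E <= puc_xi_law lam mu alpha T k)%E.
Proof.
apply: le_trans (nneseries_term_le k (puc_xi_term_ge0 k)).
rewrite lee_fin ler_wpM2l ?puc_eta_law_diag //.
by rewrite poisson_pmfE mulr_ge0 ?expR_ge0 ?divr_ge0 ?exprn_ge0.
Qed.

End xi_law_bounds.

Section prob_bounds.
Variables (R : realType) (lam mu alpha T : R) (phi : R -> R) (B : set R).
Hypotheses (lam_gt0 : 0 < lam) (mu_gt0 : 0 < mu) (aT_ge0 : 0 <= alpha * T).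
Local Notation a := (alpha * T).
Local Notation P := (puc_prob lam mu alpha phi T B).

Lemma puc_prob_term_ge0 k :
  (0 <= if pselect (B (k%:R / phi T)%R) then puc_xi_law lam mu alpha T k else 0)%E.
Proof. by case: pselect => [Bk|//]; exact: puc_xi_law_ge0. Qed.

Lemma puc_prob_ge0 : (0 <= P)%E.
Proof. by apply: nneseries_ge0 => k _ _; exact: puc_prob_term_ge0. Qed.

Lemma puc_prob_le_tail m : (forall k : nat, B (k%:R / phi T) -> (m <= k)%N) ->
  (P <= (a ^+ m / m`!%:R * expR a)%:E)%E.
Proof.
move=> B_ge_m; apply: lime_le.
  by apply: is_cvg_nneseries => k _ _; exact: puc_prob_term_ge0.
apply: nearW => N.
apply: le_trans (_ : (\sum_(0 <= k < N | (m <= k)%N) (a ^+ k / k`!%:R)%:E <= _)%E).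
  rewrite [leRHS]big_mkcond; apply: lee_sum => k _.
  case: pselect => [Bk | nBk]; first by rewrite B_ge_m //; exact: puc_xi_law_le.
  by case: ifP; rewrite // lee_fin divr_ge0 ?exprn_ge0.
by rewrite sumEFin lee_fin exp_tail_le.
Qed.

Lemma puc_prob_le_expR : (P <= (expR a)%:E)%E.
Proof.
by have := @puc_prob_le_tail 0 (fun k _ => leq0n k); rewrite expr0 fact0 divr1 mul1r.
Qed.

Lemma puc_prob_fin_num : P \is a fin_num.
Proof. by rewrite ge0_fin_numE ?puc_prob_ge0 // (le_lt_trans puc_prob_le_expR) ?ltry. Qed.

Lemma puc_prob_ge k : B (k%:R / phi T) ->
  ((Defs.poisson_pmf alpha T k * (lam / (lam + mu)) ^+ k)%:E <= P)%E.
Proof.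
move=> Bk; apply: le_trans (nneseries_term_le k puc_prob_term_ge0).
by case: pselect => [Bk' | nBk]; [exact: puc_xi_law_ge | case: nBk].
Qed.

End prob_bounds.

Section logarithmic_estimates.
Variable R : realType.

Lemma ln_le_subr1 (x : R) : 0 < x -> ln x <= x - 1.
Proof. by move=> x_gt0; have := expR_ge1Dx (ln x); rewrite lnK ?posrE //; lra. Qed.

(* x |-> x (ln x - ln c - 1) has derivative ln x - ln c >= 0 on [c, +oo) *)
Lemma ler_xlnx_sub_x (c M x : R) : 0 < c -> c <= M -> M <= x ->
  M * (ln M - ln c - 1) <= x * (ln x - ln c - 1).
Proof.
move=> c_gt0 le_cM le_Mx.
have M_gt0 : 0 < M by apply: lt_le_trans le_cM.
have x_gt0 : 0 < x by apply: lt_le_trans le_Mx.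
have ln_Mx : x * (ln M - ln x) <= M - x.
  have -> : M - x = x * (M / x - 1) by field; rewrite gt_eqF.
  rewrite -ln_div ?posrE // ler_wpM2l ?(ltW x_gt0) //.
  by apply: ln_le_subr1; rewrite divr_gt0.
have : 0 <= (x - M) * (ln M - ln c) by rewrite mulr_ge0 // subr_ge0 // ler_ln ?posrE.
lra.
Qed.

Lemma ler_xlnx (d k K : R) : 0 < d -> 0 < k -> k <= K -> d <= K ->
  k * (ln k - ln d) <= K * (ln K - ln d).
Proof.
move=> d_gt0 k_gt0 le_kK le_dK.
have K_gt0 : 0 < K by apply: lt_le_trans le_kK.
have [le_kd | lt_dk] := leP k d.
  apply: (@le_trans _ _ 0).
    by rewrite mulr_ge0_le0 ?(ltW k_gt0) // subr_le0 ler_ln ?posrE.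
  by rewrite mulr_ge0 ?(ltW K_gt0) // subr_ge0 ler_ln ?posrE.
have e_gt0 : (0 : R) < expR 1 := expR_gt0 1.
have le_de : d / expR 1 <= d.
  by rewrite ler_pdivrMr // ler_peMr ?(ltW d_gt0) //; have := expR_ge1Dx (1 : R); lra.
have := @ler_xlnx_sub_x (d / expR 1) k K (divr_gt0 d_gt0 e_gt0) (le_trans le_de (ltW lt_dk)) le_kK.
have shift u : u - (ln d - 1) - 1 = u - ln d by ring.
by rewrite ln_div ?posrE // expRK !shift.
Qed.

Lemma fact_leq_expnn m : (m`! <= m ^ m)%N.
Proof.
elim: m => // m IH; rewrite factS expnS leq_mul //.
by apply: leq_trans IH _; case: m => // m; rewrite leq_exp2r.
Qed.

Lemma ln_fact_le m : ln (m`!%:R : R) <= m%:R * ln m%:R.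
Proof.
case: m => [|m]; first by rewrite mul0r ln1.
rewrite mulr_natl -lnXn ?ltr0n // ler_ln ?posrE ?ltr0n ?fact_gt0 ?exprn_gt0 ?ltr0n //.
by rewrite -natrX ler_nat fact_leq_expnn.
Qed.

Lemma ln_fact_ge m : m%:R * ln m%:R - m%:R <= ln (m`!%:R : R).
Proof.
case: m => [|m]; first by rewrite !mul0r subr0 ln1.
have m_gt0 : (0 : R) < m.+1%:R by rewrite ltr0n.
have fact_gt0 : (0 : R) < m.+1`!%:R by rewrite ltr0n fact_gt0.
have : m.+1%:R ^+ m.+1 / m.+1`!%:R <= expR (m.+1%:R : R).
  by have := expR_ge1Dxn m (ltW m_gt0); lra.
rewrite -ler_ln ?posrE ?expR_gt0 ?divr_gt0 ?exprn_gt0 // expRK.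
by rewrite ln_div ?posrE ?exprn_gt0 // lnXn // -mulr_natl; lra.
Qed.

Lemma ln_le_poisson_tail (a M p : R) m : 0 < a -> 0 < p -> a <= M -> M <= m%:R ->
  p <= a ^+ m / m`!%:R * expR a -> ln p <= a - M * (ln M - ln a - 1).
Proof.
move=> a_gt0 p_gt0 le_aM le_Mm le_p.
have fact_gt0 : (0 : R) < m`!%:R by rewrite ltr0n fact_gt0.
have := le_p; rewrite -ler_ln ?posrE ?(lt_le_trans p_gt0 le_p) //.
rewrite lnM ?posrE ?divr_gt0 ?exprn_gt0 ?expR_gt0 // expRK.
rewrite ln_div ?posrE ?exprn_gt0 // lnXn // -[ln a *+ m]mulr_natl.
have := ln_fact_ge m; have := ler_xlnx_sub_x a_gt0 le_aM le_Mm; lra.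
Qed.

Lemma ln_ge_poisson_term (a q K p : R) k : 0 < a -> 0 < q -> (0 < k)%N ->
  k%:R <= K -> a * q <= K ->
  expR (- a) * a ^+ k / k`!%:R * q ^+ k <= p -> - a - K * (ln K - ln a - ln q) <= ln p.
Proof.
move=> a_gt0 q_gt0 k_gt0 le_kK le_aqK le_p.
have fact_gt0 : (0 : R) < k`!%:R by rewrite ltr0n fact_gt0.
have term_gt0 : 0 < expR (- a) * a ^+ k / k`!%:R * q ^+ k.
  by rewrite !mulr_gt0 ?invr_gt0 ?exprn_gt0 ?expR_gt0.
have := le_p; rewrite -ler_ln ?posrE ?(lt_le_trans term_gt0 le_p) //.
rewrite lnM ?posrE ?divr_gt0 ?mulr_gt0 ?exprn_gt0 ?expR_gt0 //.
rewrite ln_div ?posrE ?mulr_gt0 ?exprn_gt0 ?expR_gt0 //.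
rewrite lnM ?posrE ?exprn_gt0 ?expR_gt0 // expRK !lnXn //.
rewrite -[ln a *+ k]mulr_natl -[ln q *+ k]mulr_natl.
have kR_gt0 : (0 : R) < k%:R by rewrite ltr0n.
have := ler_xlnx (mulr_gt0 a_gt0 q_gt0) kR_gt0 le_kK le_aqK.
rewrite lnM ?posrE //; have := ln_fact_le k; lra.
Qed.

End logarithmic_estimates.

Section norm_log_bounds.
Variables (R : realType) (psi : R -> R) (P : R -> \bar R) (T p c : R).
Hypotheses (psi_gt0 : 0 < psi T) (PE : P T = p%:E).

Lemma norm_log_le : 0 <= p -> (0 < p -> ln p <= c * psi T) ->
  (norm_log psi P T <= c%:E)%E.
Proof.
rewrite /norm_log PE le0r => /orP[/eqP -> | p_gt0 ln_le]; first by rewrite eqxx leNye.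
by rewrite gt_eqF ?lte_fin //= lee_fin ler_pdivrMr // ln_le.
Qed.

Lemma norm_log_ge : 0 < p -> c * psi T <= ln p -> (c%:E <= norm_log psi P T)%E.
Proof. by move=> p_gt0 ln_ge; rewrite /norm_log PE gt_eqF ?lte_fin //= lee_fin ler_pdivlMr. Qed.

End norm_log_bounds.

Section limf_bounds.
Variables (T : choiceType) (X : filteredType T) (R : realType) (F : set_system X).
Variables (f : X -> \bar R) (c : \bar R).

Lemma limf_esup_le_near : (\forall x \near F, (f x <= c)%E) -> (limf_esup f F <= c)%E.
Proof.
move=> f_le; rewrite limf_esupE.
apply: le_trans (ereal_inf_lbound _) _; first by exists [set x | (f x <= c)%E].
by apply: ge_ereal_sup => _ [x f_le_x <-].
Qed.

Lemma limf_einf_ge_near : (\forall x \near F, (c <= f x)%E) -> (c <= limf_einf f F)%E.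
Proof.
move=> f_ge; rewrite limf_einfE.
apply: le_trans _ (ereal_sup_ubound _); last by exists [set x | (c <= f x)%E].
by apply: le_ereal_inf_tmp => _ [x c_le_f <-].
Qed.

End limf_bounds.

Lemma lee_oppr_real_lt {R : realType} (l r : \bar R) :
  (forall z : R, (z%:E < r)%E -> (l <= (- z)%:E)%E) -> (l <= - r)%E.
Proof.
case: r => [r | |] l_le; last by rewrite leey.
  apply/lee_addgt0Pr => e e_gt0; rewrite -EFinN -EFinD.
  by apply: le_trans (l_le (r - e) _) _; rewrite ?lte_fin ?lee_fin; lra.
case: l l_le => [l | |] l_le //.
  by exfalso; have := l_le (- l + 1)%R (ltry _); rewrite lee_fin; lra.
by have := l_le 0%R (ltry _).
Qed.

Lemma exists_nat_ball {R : realType} (x s d : R) : 0 <= x -> 0 < s -> s^-1 < d ->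
  exists k : nat, [/\ ball x d (k%:R / s), x * s < k%:R & k%:R <= x * s + 1].
Proof.
move=> x_ge0 s_gt0 lt_sd.
have /andP[le_tx lt_xt] := truncn_itv (mulr_ge0 x_ge0 (ltW s_gt0)).
exists (Num.truncn (x * s)).+1; split => //; last by rewrite -natr1 lerD2r.
have lt_xk : x < (Num.truncn (x * s)).+1%:R / s by rewrite ltr_pdivlMr.
have le_kx : (Num.truncn (x * s)).+1%:R / s <= x + s^-1.
  by rewrite ler_pdivrMr // mulrDl mulVf ?gt_eqF // -natr1 lerD2r.
by rewrite -ball_normE /ball_ /= ltr_norml; apply/andP; split; lra.
Qed.

Section large_deviation_bounds.
Variables (R : realType) (phi : R -> R).
Hypotheses (phi_gt0 : forall T, 0 < T -> 0 < phi T)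
  (phi_ratio : (fun T => phi T / T) @ +oo --> +oo).
Local Notation psi T := (phi T * ln (phi T / T)).

Lemma near_mulr_le_phi c : \forall T \near +oo, c * T <= phi T.
Proof.
near=> T; have T_gt0 : 0 < T by near: T; exact: nbhs_pinfty_gt.
by rewrite -ler_pdivlMr //; near: T; exact: (cvgryPge _).1 phi_ratio _.
Unshelve. all: end_near.
Qed.

Lemma near_le_phi c : \forall T \near +oo, c <= phi T.
Proof.
near=> T; apply: (@le_trans _ _ (1 * T)); last by near: T; exact: near_mulr_le_phi.
by rewrite mul1r; near: T; exact: nbhs_pinfty_ge (num_real c).
Unshelve. all: end_near.
Qed.

Lemma near_lin_le_psi c1 c2 d : 0 < d ->
  \forall T \near +oo, c1 * T + c2 * phi T <= d * psi T.
Proof.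
move=> d_gt0; set K := (`|c1| + `|c2|) / d.
near=> T; have T_gt0 : 0 < T by near: T; exact: nbhs_pinfty_gt.
have le_T_phi : 1 * T <= phi T by near: T; exact: near_mulr_le_phi.
rewrite mul1r in le_T_phi.
have le_K : K <= ln (phi T / T).
  have le_eK : expR K <= phi T / T by near: T; exact: (cvgryPge _).1 phi_ratio _.
  by rewrite -ler_expR lnK // posrE (lt_le_trans (expR_gt0 K) le_eK).
have c1_T : c1 * T <= `|c1| * phi T.
  by apply: le_trans (ler_wpM2r (ltW T_gt0) (ler_norm c1)) _; rewrite ler_wpM2l.
have c2_phi : c2 * phi T <= `|c2| * phi T by rewrite ler_wpM2r ?ler_norm // ltW ?phi_gt0.
have sum_le : `|c1| + `|c2| <= d * ln (phi T / T) by rewrite mulrC -ler_pdivrMr.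
have := ler_wpM2l (ltW (phi_gt0 T_gt0)) sum_le.
lra.
Unshelve. all: end_near.
Qed.

Lemma near_psi_gt0 : \forall T \near +oo, 0 < psi T.
Proof.
near=> T; have T_gt0 : 0 < T by near: T; exact: nbhs_pinfty_gt.
rewrite mulr_gt0 ?phi_gt0 // ln_gt0 // (@lt_le_trans _ _ 2) ?ltr1n //.
by near: T; exact: (cvgryPge _).1 phi_ratio _.
Unshelve. all: end_near.
Qed.

Variables (lam mu alpha : R).
Hypotheses (lam_gt0 : 0 < lam) (mu_gt0 : 0 < mu) (alpha_gt0 : 0 < alpha).
Local Notation P B T := (puc_prob lam mu alpha phi T B).
Local Notation L B := (norm_log (fun T => psi T) (fun T => P B T)).

Lemma puc_norm_log_le B T c : 0 < T -> 0 < psi T ->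
  (0 < fine (P B T) -> ln (fine (P B T)) <= c * psi T) -> (L B T <= c%:E)%E.
Proof.
move=> T_gt0 psi_gt0 ln_le; have aT_ge0 : 0 <= alpha * T by rewrite mulr_ge0 // ltW.
apply: (norm_log_le (p := fine (P B T))) => //.
  by rewrite fineK // puc_prob_fin_num.
by rewrite fine_ge0 // puc_prob_ge0.
Qed.

Lemma puc_norm_log_ge B T c : 0 < T -> 0 < psi T -> 0 < fine (P B T) ->
  c * psi T <= ln (fine (P B T)) -> (c%:E <= L B T)%E.
Proof.
move=> T_gt0 psi_gt0 p_gt0 ln_ge; have aT_ge0 : 0 <= alpha * T by rewrite mulr_ge0 // ltW.
by apply: (norm_log_ge (p := fine (P B T))) => //; rewrite fineK // puc_prob_fin_num.
Qed.

Lemma near_norm_log_le_neg (B : set R) (z : R) : z < 0 ->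
  \forall T \near +oo, (L B T <= (- z)%:E)%E.
Proof.
move=> z_lt0; near=> T.
have T_gt0 : 0 < T by near: T; exact: nbhs_pinfty_gt.
have aT_ge0 : 0 <= alpha * T by rewrite mulr_ge0 // ltW.
have aT_le : alpha * T + 0 * phi T <= - z * psi T.
  by near: T; apply: near_lin_le_psi; rewrite oppr_gt0.
apply: puc_norm_log_le => //; first by near: T; exact: near_psi_gt0.
move=> p_gt0; rewrite mul0r addr0 in aT_le; apply: le_trans aT_le.
rewrite -ler_expR lnK ?posrE // -lee_fin fineK ?puc_prob_fin_num //.
exact: puc_prob_le_expR.
Unshelve. all: end_near.
Qed.

Lemma near_norm_log_le (B : set R) (z y : R) : 0 <= z -> z < y ->
  (forall x, B x -> 0 <= x -> y < x) -> \forall T \near +oo, (L B T <= (- z)%:E)%E.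
Proof.
move=> z_ge0 lt_zy B_gt_y.
pose y1 := (z + y) / 2; pose C := ln y1 - ln alpha - 1.
have y1_gt0 : 0 < y1 by rewrite /y1; lra.
near=> T.
have T_gt0 : 0 < T by near: T; exact: nbhs_pinfty_gt.
have phiT_gt0 := phi_gt0 T_gt0.
have aT_gt0 : 0 < alpha * T by rewrite mulr_gt0.
have aT_le : alpha * T <= y1 * phi T.
  have : alpha / y1 * T <= phi T by near: T; exact: near_mulr_le_phi.
  by rewrite mulrAC ler_pdivrMr // [phi T * _]mulrC.
have gap : 1 <= (y - y1) * phi T.
  have : (y - y1)^-1 <= phi T by near: T; exact: near_le_phi.
  by rewrite -ler_pdivrMl ?mulr1 // /y1; lra.
have hC : alpha * T + (- y1 * C) * phi T <= (y1 - z) * psi T.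
  by near: T; apply: near_lin_le_psi; rewrite /y1; lra.
have [m le_my lt_ym] : exists2 m : nat, m%:R <= y * phi T & y * phi T < m%:R + 1.
  have /andP[] := truncn_itv (mulr_ge0 (le_trans z_ge0 (ltW lt_zy)) (ltW phiT_gt0)).
  by rewrite -natr1; exists (Num.truncn (y * phi T)).
have B_ge_m k : B (k%:R / phi T) -> (m <= k)%N.
  move=> /B_gt_y /(_ (divr_ge0 (ler0n _ _) (ltW phiT_gt0))).
  by rewrite ltr_pdivlMr // => lt_yk; rewrite -(ler_nat R); lra.
apply: puc_norm_log_le => //; first by near: T; exact: near_psi_gt0.
move=> p_gt0.
have le_p : fine (P B T) <= (alpha * T) ^+ m / m`!%:R * expR (alpha * T).
  rewrite -lee_fin fineK ?(puc_prob_fin_num phi B lam_gt0 mu_gt0 (ltW aT_gt0)) //.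
  exact: (puc_prob_le_tail (phi := phi) (B := B) lam_gt0 mu_gt0 (ltW aT_gt0) B_ge_m).
have le_y1m : y1 * phi T <= m%:R by lra.
have := ln_le_poisson_tail aT_gt0 p_gt0 aT_le le_y1m le_p.
rewrite ln_div ?posrE // [ln (y1 * _)]lnM ?posrE // [ln (alpha * T)]lnM ?posrE //.
rewrite ln_div ?posrE // /C in hC; lra.
Unshelve. all: end_near.
Qed.

Lemma near_norm_log_ge (B : set R) (x e : R) : 0 <= x -> interior B x -> 0 < e ->
  \forall T \near +oo, ((- (x + e))%:E <= L B T)%E.
Proof.
move=> x_ge0 /nbhs_ballP[d /= d_gt0 ball_B] e_gt0.
pose x1 := x + e / 2; pose q := lam / (lam + mu); pose D := ln x1 - ln alpha - ln q.
have x1_gt0 : 0 < x1 by rewrite /x1; lra.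
have q_gt0 : 0 < q by rewrite divr_gt0 // addr_gt0.
have q_le1 : q <= 1 by rewrite ler_pdivrMr ?addr_gt0 // mul1r lerDl ltW.
near=> T.
have T_gt0 : 0 < T by near: T; exact: nbhs_pinfty_gt.
have phiT_gt0 := phi_gt0 T_gt0.
have aT_gt0 : 0 < alpha * T by rewrite mulr_gt0.
have aTq_le : alpha * T * q <= x1 * phi T.
  have : alpha / x1 * T <= phi T by near: T; exact: near_mulr_le_phi.
  rewrite mulrAC ler_pdivrMr // [phi T * _]mulrC; apply: le_trans.
  exact: ler_piMr (ltW aT_gt0) q_le1.
have gap : 1 <= e / 2 * phi T.
  have : (e / 2)^-1 <= phi T by near: T; exact: near_le_phi.
  by rewrite -ler_pdivrMl ?mulr1 //; lra.
have mesh : (phi T)^-1 < d.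
  have : d^-1 + 1 <= phi T by near: T; exact: near_le_phi.
  by rewrite -ltf_pV2 ?posrE ?invr_gt0 ?invrK //; lra.
have hC : alpha * T + x1 * D * phi T <= e / 2 * psi T.
  by near: T; apply: near_lin_le_psi; lra.
have [k [/ball_B Bk lt_xk le_kx]] := exists_nat_ball x_ge0 phiT_gt0 mesh.
have k_gt0 : (0 < k)%N by rewrite -(ltr0n R); apply: le_lt_trans lt_xk; rewrite mulr_ge0 // ltW.
have le_kx1 : k%:R <= x1 * phi T by rewrite /x1; lra.
have le_p : Defs.poisson_pmf alpha T k * q ^+ k <= fine (P B T).
  rewrite -lee_fin fineK ?(puc_prob_fin_num phi B lam_gt0 mu_gt0 (ltW aT_gt0)) //.
  exact: (puc_prob_ge (phi := phi) (B := B) lam_gt0 mu_gt0 (ltW aT_gt0) Bk).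
have term_gt0 : 0 < Defs.poisson_pmf alpha T k * q ^+ k.
  by rewrite poisson_pmfE !mulr_gt0 ?expR_gt0 ?exprn_gt0 ?invr_gt0 ?ltr0n ?fact_gt0.
apply: puc_norm_log_ge (lt_le_trans term_gt0 le_p) _ => //.
  by near: T; exact: near_psi_gt0.
have := ln_ge_poisson_term aT_gt0 q_gt0 k_gt0 le_kx1 aTq_le le_p.
rewrite [ln (phi T / T)]ln_div ?posrE // [ln (x1 * _)]lnM ?posrE //.
rewrite [ln (alpha * T)]lnM ?posrE //.
rewrite [ln (phi T / T)]ln_div ?posrE // /D in hC.
rewrite /x1 in hC *; lra.
Unshelve. all: end_near.
Qed.

Lemma puc_ldp_upper (B : set R) :
  (limf_esup (L B) (pinfty_nbhs R) <= - rate_inf rate_I2 (closure B))%E.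
Proof.
apply: lee_oppr_real_lt => z lt_z; apply: limf_esup_le_near.
have [z_lt0 | z_ge0] := ltP z 0; first exact: near_norm_log_le_neg.
have [y lt_zy lt_y] : exists2 y, z < y & (y%:E < rate_inf rate_I2 (closure B))%E.
  move: lt_z; case: (rate_inf rate_I2 (closure B)) => [r | |] //.
  - by rewrite lte_fin => lt_zr; exists ((z + r) / 2); rewrite ?lte_fin; lra.
  - by move=> _; exists (z + 1); rewrite ?ltry //; lra.
apply: near_norm_log_le z_ge0 lt_zy _ => x Bx x_ge0.
have : (rate_inf rate_I2 (closure B) <= rate_I2 x)%E.
  by apply: ereal_inf_lbound; exists x => //; exact: subset_closure.
by rewrite /rate_I2 ltNge x_ge0 => /(lt_le_trans lt_y); rewrite lte_fin.
Qed.

Lemma puc_ldp_lower (B : set R) :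
  (- rate_inf rate_I2 (interior B) <= limf_einf (L B) (pinfty_nbhs R))%E.
Proof.
rewrite /rate_inf /ereal_inf oppeK; apply: ge_ereal_sup => _ [_ [x Bx <-] <-].
rewrite /rate_I2; case: ltP => [_ | x_ge0] /=; first exact: leNye.
apply/lee_addgt0Pr => e e_gt0; rewrite -leeBlDr // -EFinB -opprD.
by apply: limf_einf_ge_near; exact: near_norm_log_ge.
Qed.

End large_deviation_bounds.

Lemma rate_I2_sublevel_compact {R : realType} (c : R) :
  compact [set x | (rate_I2 x <= c%:E)%E].
Proof.
have -> : [set x | (rate_I2 x <= c%:E)%E] = `[0, c]%classic.
  apply/seteqP; split => x /=; rewrite /rate_I2 in_itv /=.
    by case: ltP => // x_ge0; rewrite lee_fin => ->.
  by move=> /andP[x_ge0 x_le]; rewrite ltNge x_ge0 /= lee_fin.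
exact: segment_compact.
Qed.

Theorem theorem2p4 (R : realType) (lam mu alpha : R) (phi : R -> R) :
  0 < lam -> 0 < mu -> 0 < alpha ->
  (forall T, 0 < T -> 0 < phi T) ->
  (fun T => phi T / T) @ +oo --> +oo ->
  LDP (fun T B => puc_prob lam mu alpha phi T B) rate_I2
      (fun T => phi T * ln (phi T / T)).
Proof.
move=> lam_gt0 mu_gt0 alpha_gt0 phi_gt0 phi_ratio.
split=> [c _ | ]; first exact: rate_I2_sublevel_compact.
by split=> B _; [exact: puc_ldp_upper | exact: puc_ldp_lower].
Qed.
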